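(* Let $C=\bigwedge_{k=1}^m(c_{k,1}\vee c_{k,2}\vee c_{k,3})$ be a 3-SAT formula in $n$ Boolean variables $x_1,\dots,x_n$, where each literal $c_{k,j}$ equals $x_i$ or $\overline{x_i}$ for some $i$. On $m+n$ qubits labelled $\{1,\dots,n\}\cup\{d_1,\dots,d_m\}$ define \[H_C=\sum_{k=1}^m-(X_{d_k}+Z_{d_k}+I)\otimes\big(S(c_{k,1})+S(c_{k,2})+S(c_{k,3})+2I\big),\] where $S(c)=Z_i$ if $c=x_i$ and $S(c)=X_i$ if $c=\overline{x_i}$. For $x\in\{0,1\}^n$, $y\in\{0,1\}^m$ let ${\sf W}(x,y)=\big(\bigotimes_{i=1}^n W_i^{x_i}\big)\otimes\big(\bigotimes_{j=1}^m W_{d_j}^{y_j}\big)$, with $W$ the Hadamard gate. Then for every $x\in\{0,1\}^n$: $C(x)$ evaluates to true if and only if for all $y\in\{0,1\}^m$ the matrix ${\sf W}(x,y)H_C{\sf W}(x,y)^\dagger$ is a symmetric $Z$-matrix.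
   Context: A Hermitian matrix is a symmetric $Z$-matrix if it is real and all off-diagonal entries in the computational basis are non-positive. $X_\alpha,Z_\alpha$ denote Pauli matrices on qubit $\alpha$; $W=\frac1{\sqrt2}\begin{pmatrix}1&1\\1&-1\end{pmatrix}$, $W^0=I$, $W^1=W$. *)

(* Real scalars: all operators involved are real matrices. *)
From HB Require Import structures.
From mathcomp Require Import all_boot all_order all_algebra.
Set Implicit Arguments. Unset Strict Implicit. Unset Printing Implicit Defensive.
Import Order.TTheory GRing.Theory Num.Theory.
Local Open Scope ring_scope.

Section Defs.
Variable R : rcfType.

Definition pauliX : 'M[R]_2 := \matrix_(i, j) (if i != j then 1 else 0).
Definition pauliZ : 'M[R]_2 :=
  \matrix_(i, j) (if i == j then (if i == 0 then 1 else -1) else 0).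
Definition hadamard : 'M[R]_2 :=
  (Num.sqrt 2)^-1 *: \matrix_(i, j) (if (i == 1) && (j == 1) then -1 else 1).

Definition qbit N (i : 'I_(2 ^ N)) (q : 'I_N) : 'I_2 := inord (odd (i %/ 2 ^ q)).

Definition kron N (A : 'I_N -> 'M[R]_2) : 'M[R]_(2 ^ N) :=
  \matrix_(i, j) \prod_(q < N) A q (qbit i q) (qbit j q).

Definition on_qubit N (a : 'I_N) (P : 'M[R]_2) : 'M[R]_(2 ^ N) :=
  kron (fun q => if q == a then P else 1%:M).

Definition symZmatrix k (A : 'M[R]_k) : Prop :=
  A^T = A /\ forall i j : 'I_k, i != j -> A i j <= 0.

End Defs.

(* 3-SAT: a literal is (variable index, negated?) ; literal (i,false) = x_i,
   (i,true) = not x_i.  A formula has m clauses of 3 literals. *)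
Definition lit_val n (x : 'I_n -> bool) (c : 'I_n * bool) : bool :=
  if c.2 then ~~ x c.1 else x c.1.

Definition sat_eval n m (C : 'I_m -> 'I_3 -> 'I_n * bool) (x : 'I_n -> bool) : bool :=
  [forall k, [exists j, lit_val x (C k j)]].

(* qubits: variable i is qubit lshift m i, ancilla d_k is qubit rshift n k *)
Definition var_qubit n m (i : 'I_n) : 'I_(n + m) := lshift m i.
Definition anc_qubit n m (k : 'I_m) : 'I_(n + m) := rshift n k.

Definition S_op (R : rcfType) n m (c : 'I_n * bool) : 'M[R]_(2 ^ (n + m)) :=
  on_qubit (var_qubit m c.1) (if c.2 then pauliX R else pauliZ R).

Definition H_C (R : rcfType) n m (C : 'I_m -> 'I_3 -> 'I_n * bool) : 'M[R]_(2 ^ (n + m)) :=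
  \sum_(k < m)
    - ((on_qubit (anc_qubit n k) (pauliX R) + on_qubit (anc_qubit n k) (pauliZ R) + 1%:M)
       *m (S_op R m (C k 0) + S_op R m (C k 1) + S_op R m (C k 2%:R) + 2%:R%:M)).

Definition Wxy (R : rcfType) n m (x : 'I_n -> bool) (y : 'I_m -> bool)
  : 'M[R]_(2 ^ (n + m)) :=
  kron (fun q : 'I_(n + m) =>
    if (match split q with inl i => x i | inr k => y k end)
    then hadamard R else 1%:M).

From mathcomp Require Import all_boot all_order all_algebra.
From mathcomp Require Import lra.
Import GRing.Theory Num.Theory.
Set Implicit Arguments. Unset Strict Implicit. Unset Printing Implicit Defensive.

(* Since the Hadamard gate swaps X and Z, conjugating by W(x,y) replaces S(c)
   by X_i when the literal c is true under x and by Z_i when it is false, and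
   fixes X + Z + I on every ancilla.  So clause k contributes
   -(X+Z+I)_{d_k} (L_1 + L_2 + L_3 + 2I) with each L_j in {X_i, Z_i}.  As X,
   X + I and Z + I are entrywise nonnegative, a satisfied clause (some L_j = X)
   gives an entrywise nonnegative product.  For a violated clause all L_j are Z,
   and the entry between the all-ones basis state and its flip on d_k equals
   (X+Z+I)_{01} (3 Z_{11} + 2) = -1; no other clause can flip d_k, so the
   conjugated H_C has the positive off-diagonal entry 1. *)

Lemma bin_digits_inj N i j : (i < 2 ^ N)%N -> (j < 2 ^ N)%N ->
  (forall q, (q < N)%N -> odd (i %/ 2 ^ q) = odd (j %/ 2 ^ q)) -> i = j.
Proof.
elim: N i j => [|N IH] i j; first by rewrite expn0 !ltnS !leqn0 => /eqP-> /eqP->.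
move=> ltiN ltjN eq_digits.
have eq_half : i %/ 2 = j %/ 2.
  apply: IH; rewrite ?ltn_divLR -?expnSr // => q ltqN.
  by rewrite -!divnMA -expnS; apply: eq_digits.
have := eq_digits 0%N isT; rewrite expn0 !divn1 => eq_odd.
by rewrite -(odd_double_half i) -(odd_double_half j) -!divn2 eq_half eq_odd.
Qed.

Local Open Scope ring_scope.

Section Bits.
Variable N : nat.

Definition bits (i : 'I_(2 ^ N)) : {ffun 'I_N -> 'I_2} := [ffun q => qbit i q].

Lemma bits_inj : injective bits.
Proof.
move=> i j /ffunP eq_ij; apply/val_inj/(@bin_digits_inj N); rewrite ?ltn_ord // => q ltqN.
have := eq_ij (Ordinal ltqN); rewrite !ffunE /qbit => /(congr1 val) /=.
by rewrite !inordK ?ltnS ?leq_b1 //; do 2 case: odd.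
Qed.

Lemma bits_bij : bijective bits.
Proof. by apply: inj_card_bij; [exact: bits_inj | rewrite card_ffun !card_ord]. Qed.

Lemma qbit_neq (i j : 'I_(2 ^ N)) : i != j -> exists q, qbit i q != qbit j q.
Proof.
move=> neq_ij; apply/existsP; rewrite -negb_forall; apply: contra neq_ij.
by move=> /forallP eq_ij; apply/eqP/bits_inj/ffunP => q; rewrite !ffunE; apply/eqP.
Qed.

Lemma qbit_surj (f : 'I_N -> 'I_2) : exists i : 'I_(2 ^ N), forall q, qbit i q = f q.
Proof.
have [g _ bitsK] := bits_bij; exists (g [ffun q => f q]) => q.
by have /ffunP/(_ q) := bitsK [ffun q => f q]; rewrite !ffunE.
Qed.

End Bits.

Section Kronecker.
Variables (R : rcfType) (N : nat).
Implicit Types (A B W : 'I_N -> 'M[R]_2) (P Q : 'M[R]_2) (a b c : 'I_N).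
Implicit Types (i j : 'I_(2 ^ N)).

Lemma kron_eq0 A i j c : A c (qbit i c) (qbit j c) = 0 -> kron A i j = 0.
Proof. by move=> Ac0; rewrite mxE (bigD1 c) //= Ac0 mul0r. Qed.

Lemma eq_kron A B : A =1 B -> kron A = kron B.
Proof.
by move=> eqAB; apply/matrixP => i j; rewrite !mxE; apply: eq_bigr => q _; rewrite eqAB.
Qed.

Lemma kron_mul A B : kron A *m kron B = kron (fun q => A q *m B q).
Proof.
apply/matrixP => i k; rewrite !mxE.
under eq_bigr => j _ do rewrite !mxE -big_split /=.
under [RHS]eq_bigr => q _ do rewrite mxE.
rewrite bigA_distr_bigA (reindex (@bits N)) /=.
  by apply: eq_bigr => j _; apply: eq_bigr => q _; rewrite ffunE.
by have [g bitsK gK] := bits_bij N; exists g => f _; [apply: bitsK | apply: gK].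
Qed.

Lemma kron1 : kron (fun _ => 1%:M) = 1%:M :> 'M[R]_(2 ^ N).
Proof.
apply/matrixP => i j; rewrite [RHS]mxE.
have [<-|/qbit_neq[c neq_c]] := eqVneq i j.
  by rewrite mxE big1 // => q _; rewrite mxE eqxx.
by apply: (kron_eq0 (c := c)); rewrite mxE (negbTE neq_c).
Qed.

Lemma trmx_kron A : (kron A)^T = kron (fun q => (A q)^T).
Proof. by apply/matrixP => i j; rewrite !mxE; apply: eq_bigr => q _; rewrite mxE. Qed.

Lemma on_qubitE a P i j : (forall q, q != a -> qbit i q = qbit j q) ->
  on_qubit a P i j = P (qbit i a) (qbit j a).
Proof.
move=> eq_off_a; rewrite mxE (bigD1 a) //= eqxx big1 ?mulr1 // => q neq_qa.
by rewrite (negbTE neq_qa) eq_off_a // mxE eqxx.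
Qed.

Lemma on_qubit1 a : on_qubit a 1%:M = 1%:M :> 'M[R]_(2 ^ N).
Proof. by rewrite -kron1; apply: eq_kron => q; case: ifP. Qed.

Lemma on_qubitD a P Q : on_qubit a P + on_qubit a Q = on_qubit a (P + Q).
Proof.
apply/matrixP => i j; rewrite !mxE (bigD1 a) // [X in _ + X](bigD1 a) //.
rewrite [RHS](bigD1 a) //= !eqxx mxE mulrDl.
by congr (_ * _ + _ * _); apply: eq_bigr => q /negbTE->.
Qed.

Lemma trmx_on_qubit a P : (on_qubit a P)^T = on_qubit a P^T.
Proof. by rewrite trmx_kron; apply: eq_kron => q; case: ifP; rewrite ?trmx1. Qed.

Lemma on_qubit_comm a b P Q : a != b ->
  comm_mx (on_qubit a P) (on_qubit b Q).
Proof.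
move=> neq_ab; rewrite /comm_mx !kron_mul; apply: eq_kron => q.
case: (eqVneq q a) => [->|_]; first by rewrite (negbTE neq_ab) mulmx1 mul1mx.
by case: ifP; rewrite ?mul1mx ?mulmx1.
Qed.

Lemma on_qubit_conj W a P : (forall q, W q *m (W q)^T = 1%:M) ->
  kron W *m on_qubit a P *m (kron W)^T = on_qubit a (W a *m P *m (W a)^T).
Proof.
move=> W_orth; rewrite trmx_kron !kron_mul; apply: eq_kron => q.
by case: ifP => [/eqP-> //|_]; rewrite mulmx1.
Qed.

Lemma on_qubit_is_diag a P : is_diag_mx P -> is_diag_mx (on_qubit a P).
Proof.
move=> /is_diag_mxP P_diag; apply/is_diag_mxP => i j /qbit_neq[c neq_c].
apply: (kron_eq0 (c := c)); case: ifP => [/eqP eq_ca|_]; last first.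
  by rewrite mxE (negbTE neq_c).
by rewrite P_diag // -eq_ca.
Qed.

Definition preserves_qubit c (M : 'M[R]_(2 ^ N)) :=
  forall i j, qbit i c != qbit j c -> M i j = 0.

Lemma preserves_qubitD c M M' :
  preserves_qubit c M -> preserves_qubit c M' -> preserves_qubit c (M + M').
Proof. by move=> pM pM' i j neq_c; rewrite mxE pM // pM' // addr0. Qed.

Lemma preserves_qubitM c M M' :
  preserves_qubit c M -> preserves_qubit c M' -> preserves_qubit c (M *m M').
Proof.
move=> pM pM' i j neq_c; rewrite mxE big1 // => l _.
have [eq_il|neq_il] := eqVneq (qbit i c) (qbit l c); last by rewrite pM ?mul0r.
by rewrite pM' ?mulr0 // -eq_il.
Qed.

Lemma preserves_qubit_scalar c r : preserves_qubit c r%:M.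
Proof.
by move=> i j; have [->|/negbTE neq_ij] := eqVneq i j; rewrite ?eqxx // mxE neq_ij.
Qed.

Lemma preserves_qubit_on_qubit c a P : a != c -> preserves_qubit c (on_qubit a P).
Proof.
move=> neq_ac i j neq_c; apply: (kron_eq0 (c := c)).
by rewrite eq_sym (negbTE neq_ac) mxE (negbTE neq_c).
Qed.

End Kronecker.

Lemma addmxE (V : nmodType) k l (A B : 'M[V]_(k, l)) i j : (A + B) i j = A i j + B i j.
Proof. exact: mxE. Qed.

Definition nnegmx (R : numDomainType) k l (A : 'M[R]_(k, l)) := forall i j, 0 <= A i j.

Section NonnegMatrix.
Variable R : numDomainType.

Lemma nnegmxD k l (A B : 'M[R]_(k, l)) : nnegmx A -> nnegmx B -> nnegmx (A + B).
Proof. by move=> A_ge0 B_ge0 i j; rewrite mxE addr_ge0. Qed.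

Lemma nnegmx1 k : nnegmx (1%:M : 'M[R]_k).
Proof. by move=> i j; rewrite mxE ler0n. Qed.

Lemma nnegmxM k l p (A : 'M[R]_(k, l)) (B : 'M[R]_(l, p)) :
  nnegmx A -> nnegmx B -> nnegmx (A *m B).
Proof. by move=> A_ge0 B_ge0 i j; rewrite mxE sumr_ge0 // => h _; rewrite mulr_ge0. Qed.

End NonnegMatrix.

Lemma nnegmx_on_qubit (R : rcfType) N (a : 'I_N) (P : 'M[R]_2) :
  nnegmx P -> nnegmx (on_qubit a P).
Proof.
move=> P_ge0 i j; rewrite mxE prodr_ge0 // => q _.
by case: ifP => // _; rewrite mxE ler0n.
Qed.

Lemma mulmx_diagE (R : pzSemiRingType) k l (A : 'M[R]_(k, l)) (D : 'M[R]_l) i j :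
  is_diag_mx D -> (A *m D) i j = A i j * D j j.
Proof.
move=> /is_diag_mxP D_diag; rewrite mxE (bigD1 j) //= big1 ?addr0 // => h neq_hj.
by rewrite D_diag ?mulr0.
Qed.

Lemma is_diag_mxD (R : nmodType) k l (A B : 'M[R]_(k, l)) :
  is_diag_mx A -> is_diag_mx B -> is_diag_mx (A + B).
Proof.
move=> /is_diag_mxP A_diag /is_diag_mxP B_diag.
by apply/is_diag_mxP => i j neq_ij; rewrite mxE A_diag // B_diag // addr0.
Qed.

Lemma ord2P (i : 'I_2) : i = 0 \/ i = 1.
Proof. by case: i => [[|[|//]] lti]; [left|right]; apply: val_inj. Qed.

Lemma ord3P (j : 'I_3) : [\/ j = 0, j = 1 | j = 2%:R].
Proof.
by case: j => [[|[|[|//]]] ltj]; [constructor 1|constructor 2|constructor 3];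
  apply: val_inj.
Qed.

Section Orthogonal.
Variables (R : comPzRingType) (k : nat) (U : 'M[R]_k).
Hypothesis U_orth : U *m U^T = 1%:M.

Lemma orth_conj_mul A B : U *m (A *m B) *m U^T = U *m A *m U^T *m (U *m B *m U^T).
Proof. by rewrite -!mulmxA (mulmxA U^T) (mulmx1C U_orth) mul1mx. Qed.

Lemma orth_conj_scalar r : U *m r%:M *m U^T = r%:M.
Proof. by rewrite mul_mx_scalar -scalemxAl U_orth scalemx1. Qed.

End Orthogonal.

Section Gates.
Variable R : rcfType.
Local Notation X := (pauliX R).
Local Notation Z := (pauliZ R).
Local Notation H := (hadamard R).

Lemma pauliX_tr : X^T = X.
Proof. by apply/matrixP => i j; rewrite !mxE eq_sym. Qed.

Lemma pauliZ_tr : Z^T = Z.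
Proof. by apply/matrixP => i j; rewrite !mxE eq_sym; case: eqP => // ->. Qed.

Lemma hadamard_tr : H^T = H.
Proof.
rewrite /hadamard linearZ /=; congr (_ *: _).
by apply/matrixP => i j; rewrite !mxE andbC.
Qed.

Local Notation sgnmx :=
  (\matrix_(i, j) (if (i == 1) && (j == 1) then -1 else 1) : 'M[R]_2).

Lemma hadamard_conjE P : H *m P *m H^T = 2^-1 *: (sgnmx *m P *m sgnmx).
Proof.
rewrite hadamard_tr /hadamard -!scalemxAl -!scalemxAr scalerA -invfM -expr2.
by rewrite sqr_sqrtr ?ler0n.
Qed.

Lemma hadamard_orth : H *m H^T = 1%:M.
Proof.
rewrite -[H in H *m _]mulmx1 hadamard_conjE; apply/matrixP => i j.
rewrite !mxE !big_ord_recl !big_ord0 !mxE !big_ord_recl !big_ord0 !mxE.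
by case: (ord2P i) => ->; case: (ord2P j) => -> /=; lra.
Qed.

Lemma hadamard_conjX : H *m X *m H^T = Z.
Proof.
rewrite hadamard_conjE; apply/matrixP => i j.
rewrite !mxE !big_ord_recl !big_ord0 !mxE !big_ord_recl !big_ord0 !mxE.
by case: (ord2P i) => ->; case: (ord2P j) => -> /=; lra.
Qed.

Lemma hadamard_conjZ : H *m Z *m H^T = X.
Proof.
have HH : H *m H = 1%:M by rewrite -[X in _ *m X]hadamard_tr hadamard_orth.
by rewrite -hadamard_conjX hadamard_tr !mulmxA HH mul1mx -mulmxA HH mulmx1.
Qed.

Lemma pauliZ_is_diag : is_diag_mx Z.
Proof.
by apply/is_diag_mxP => i j neq_ij; rewrite mxE ifF //; apply: contraNF neq_ij => /eqP->.
Qed.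

Lemma nnegmx_pauliX : nnegmx X.
Proof. by move=> i j; rewrite mxE; case: ifP. Qed.

Lemma nnegmx_pauliZ1 : nnegmx (Z + 1%:M).
Proof.
by move=> i j; rewrite !mxE; case: (ord2P i) => ->; case: (ord2P j) => -> /=; lra.
Qed.

End Gates.

Section Conjugated3SAT.
Variables (R : rcfType) (n m : nat) (C : 'I_m -> 'I_3 -> 'I_n * bool).
Variable x : 'I_n -> bool.
Local Notation X := (pauliX R).
Local Notation Z := (pauliZ R).

Definition lit_op (c : 'I_n * bool) : 'M[R]_(2 ^ (n + m)) :=
  on_qubit (var_qubit m c.1) (if lit_val x c then X else Z).

Definition clause_op k : 'M[R]_(2 ^ (n + m)) :=
  on_qubit (anc_qubit n k) (X + Z + 1%:M)
  *m (lit_op (C k 0) + lit_op (C k 1) + lit_op (C k 2%:R) + 2%:R%:M).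

Definition Wgate (b : bool) : 'M[R]_2 := if b then hadamard R else 1%:M.

Lemma Wgate_orth b : Wgate b *m (Wgate b)^T = 1%:M.
Proof. by case: b; rewrite /= ?hadamard_orth // trmx1 mulmx1. Qed.

Lemma Wxy_orth (y : 'I_m -> bool) : Wxy R x y *m (Wxy R x y)^T = 1%:M.
Proof. by rewrite trmx_kron kron_mul -kron1; apply: eq_kron => q; apply: Wgate_orth. Qed.

Lemma Wxy_conj_var (y : 'I_m -> bool) i P :
  Wxy R x y *m on_qubit (var_qubit m i) P *m (Wxy R x y)^T =
  on_qubit (var_qubit m i) (Wgate (x i) *m P *m (Wgate (x i))^T).
Proof.
rewrite on_qubit_conj => [|q]; last exact: Wgate_orth.
by rewrite /var_qubit (unsplitK (inl i)).
Qed.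

Lemma Wxy_conj_anc (y : 'I_m -> bool) k P :
  Wxy R x y *m on_qubit (anc_qubit n k) P *m (Wxy R x y)^T =
  on_qubit (anc_qubit n k) (Wgate (y k) *m P *m (Wgate (y k))^T).
Proof.
rewrite on_qubit_conj => [|q]; last exact: Wgate_orth.
by rewrite /anc_qubit (unsplitK (inr k)).
Qed.

Lemma Wxy_conj_S_op (y : 'I_m -> bool) c :
  Wxy R x y *m S_op R m c *m (Wxy R x y)^T = lit_op c.
Proof.
rewrite Wxy_conj_var /lit_op /lit_val; case: c => i [] /=; case: (x i);
  by rewrite /= ?hadamard_conjX ?hadamard_conjZ // trmx1 mulmx1 mul1mx.
Qed.

Lemma Wxy_conj_anc_term (y : 'I_m -> bool) k :
  Wxy R x y *m (on_qubit (anc_qubit n k) X + on_qubit (anc_qubit n k) Z + 1%:M)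
    *m (Wxy R x y)^T =
  on_qubit (anc_qubit n k) (X + Z + 1%:M).
Proof.
rewrite -(on_qubit1 R (anc_qubit n k)) !on_qubitD Wxy_conj_anc; congr on_qubit.
case: (y k); rewrite /= ?trmx1 ?mulmx1 ?mul1mx //.
by rewrite !mulmxDr !mulmxDl hadamard_conjX hadamard_conjZ mulmx1 hadamard_orth (addrC Z).
Qed.

Lemma Wxy_conj_H_C (y : 'I_m -> bool) :
  Wxy R x y *m H_C R C *m (Wxy R x y)^T = \sum_k - clause_op k.
Proof.
rewrite /H_C mulmx_sumr mulmx_suml; apply: eq_bigr => k _.
rewrite mulmxN mulNmx orth_conj_mul ?Wxy_orth //; congr (- (_ *m _)).
  exact: Wxy_conj_anc_term.
by rewrite !mulmxDr !mulmxDl !Wxy_conj_S_op orth_conj_scalar ?Wxy_orth.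
Qed.

Lemma clause_op_tr k : (clause_op k)^T = clause_op k.
Proof.
have lit_op_tr c : (lit_op c)^T = lit_op c.
  by rewrite /lit_op trmx_on_qubit; case: lit_val; rewrite ?pauliX_tr ?pauliZ_tr.
have anc_lit_comm c : comm_mx (on_qubit (anc_qubit n k) (X + Z + 1%:M)) (lit_op c).
  by apply: on_qubit_comm; rewrite eq_rlshift.
rewrite trmx_mul !linearD /= !lit_op_tr tr_scalar_mx trmx_on_qubit !linearD /=.
rewrite pauliX_tr pauliZ_tr trmx1; symmetry.
apply: comm_mxD; last exact: comm_mx_scalar.
by apply: comm_mxD; [apply: comm_mxD|]; apply: anc_lit_comm.
Qed.

Lemma clause_op_nneg k : [exists j, lit_val x (C k j)] -> nnegmx (clause_op k).
Proof.
move=> /existsP[j0 true_j0]; apply: nnegmxM.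
  apply: nnegmx_on_qubit; rewrite -addrA.
  by apply: nnegmxD; [exact: nnegmx_pauliX | exact: nnegmx_pauliZ1].
have lit_ge0 : nnegmx (lit_op (C k j0)).
  by rewrite /lit_op true_j0; apply/nnegmx_on_qubit/nnegmx_pauliX.
have lit1_ge0 j : nnegmx (lit_op (C k j) + 1%:M).
  rewrite /lit_op -(on_qubit1 R (var_qubit m (C k j).1)) on_qubitD.
  apply: nnegmx_on_qubit; case: ifP => _; last exact: nnegmx_pauliZ1.
  by apply: nnegmxD; [exact: nnegmx_pauliX | exact: nnegmx1].
move=> i j; move: (lit_ge0 i j) (lit1_ge0 0 i j) (lit1_ge0 1 i j) (lit1_ge0 2%:R i j).
have two : (2%:M : 'M[R]_(2 ^ (n + m))) i j = 1%:M i j + 1%:M i j.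
  by rewrite !mxE -mulrnDl.
by rewrite !addmxE two; case: (ord3P j0) => ->; lra.
Qed.

Lemma clause_op_preserves_anc k k' :
  k' != k -> preserves_qubit (anc_qubit n k) (clause_op k').
Proof.
move=> neq_k; apply: preserves_qubitM.
  by apply: preserves_qubit_on_qubit; rewrite eq_rshift.
have lit_preserves c : preserves_qubit (anc_qubit n k) (lit_op c).
  by apply: preserves_qubit_on_qubit; rewrite eq_lrshift.
apply: preserves_qubitD; last exact: preserves_qubit_scalar.
by apply: preserves_qubitD; [apply: preserves_qubitD|]; apply: lit_preserves.
Qed.

Lemma clause_op_unsat_entry k (i j : 'I_(2 ^ (n + m))) :
  ~~ [exists j, lit_val x (C k j)] ->
  qbit i (anc_qubit n k) = 0 -> (forall q, q != anc_qubit n k -> qbit i q = 1) ->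
  (forall q, qbit j q = 1) ->
  clause_op k i j = -1.
Proof.
rewrite negb_exists => /forallP unsat i_anc i_other j1.
have lit_Z jj : lit_op (C k jj) = on_qubit (var_qubit m (C k jj).1) Z.
  by rewrite /lit_op (negbTE (unsat jj)).
have lit_jj jj : lit_op (C k jj) j j = -1 by rewrite lit_Z on_qubitE // j1 mxE.
rewrite mulmx_diagE; last first.
  have lit_diag jj : is_diag_mx (lit_op (C k jj)).
    by rewrite lit_Z; apply/on_qubit_is_diag/pauliZ_is_diag.
  apply: is_diag_mxD; last exact: scalar_mx_is_diag.
  by apply: is_diag_mxD; [apply: is_diag_mxD|]; apply: lit_diag.
rewrite on_qubitE => [|q /i_other->]; last by rewrite j1.
by rewrite i_anc j1 !addmxE !lit_jj !mxE /= eqxx mulr1n; lra.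
Qed.

End Conjugated3SAT.

Theorem lemma5p4 (R : rcfType) (n m : nat) (C : 'I_m -> 'I_3 -> 'I_n * bool)
  (x : 'I_n -> bool) :
  sat_eval C x <->
  (forall y : 'I_m -> bool,
     symZmatrix (Wxy R x y *m H_C R C *m (Wxy R x y)^T)).
Proof.
split=> [sat y | zmat].
  rewrite Wxy_conj_H_C; split.
    by rewrite linear_sum; apply: eq_bigr => k _; rewrite linearN /= clause_op_tr.
  move=> i j _; rewrite summxE sumr_le0 // => k _.
  by rewrite mxE oppr_le0 clause_op_nneg //; move/forallP: sat.
apply/forallP => k; apply: contraT => unsat.
pose d := anc_qubit n k.
have [j j1] := qbit_surj (fun _ : 'I_(n + m) => 1 : 'I_2).
have [i iE] := qbit_surj (fun q => if q == d then 0 else 1 : 'I_2).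
have i_d : qbit i d = 0 by rewrite iE eqxx.
have i_other q : q != d -> qbit i q = 1 by rewrite iE => /negbTE->.
have flip_d : qbit i d != qbit j d by rewrite i_d j1.
have neq_ij : i != j by apply: contraNneq flip_d => ->.
have [_ /(_ i j neq_ij)] := zmat (fun _ => false).
rewrite Wxy_conj_H_C summxE (bigD1 k) //= big1 => [|k' neq_k']; last first.
  by rewrite mxE (clause_op_preserves_anc R C x neq_k' flip_d) oppr0.
by rewrite mxE (clause_op_unsat_entry R unsat i_d i_other j1) addr0 opprK ler10.
Qed.
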